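(* Let $\mathcal{C}$ be a bicomplete category and let $\mathscr{E}'$ be the totally ordered category with three objects $\varnothing\to E\to *$. Let $F:\mathcal{C}\to\mathscr{E}'$ be any functor. Then the following defines a model structure $\mathbb{C}^F$ on $\mathcal{C}$: \[\mathbb{C}^F_{cof}=\{A\to B : F(B)\neq\varnothing\}\cup\mathrm{iso}\,\mathcal{C},\qquad \mathbb{C}^F_{fib}=\{X\to Y : F(X)\neq *\}\cup\mathrm{iso}\,\mathcal{C},\] \[\mathbb{C}^F_{we}=\{f : F(f)=1_\varnothing \text{ or } F(f)=1_*\}\cup\mathrm{iso}\,\mathcal{C}.\]
   Context: Bicomplete means having all finite limits and finite colimits; $\mathrm{iso}\,\mathcal{C}$ denotes the isomorphisms of $\mathcal{C}$. A model structure is a triple (weak equivalences, cofibrations, fibrations) of subcategories such that (cof, fib $\cap$ we) and (cof $\cap$ we, fib) are weak factorization systems (pairs $(\mathcal{L},\mathcal{R})$ with $\mathcal{L}$ = maps with left lifting property against $\mathcal{R}$, $\mathcal{R}$ = maps with right lifting property against $\mathcal{L}$, and every map factoring as an $\mathcal{L}$-map followed by an $\mathcal{R}$-map), and weak equivalences satisfy two-out-of-three. *)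

From Stdlib Require Import List.
Set Implicit Arguments.
Unset Strict Implicit.

Record Category := {
  Obj :> Type;
  Hom : Obj -> Obj -> Type;
  idm : forall A, Hom A A;
  comp : forall A B C, Hom B C -> Hom A B -> Hom A C;
  comp_id_l : forall A B (f : Hom A B), comp (idm B) f = f;
  comp_id_r : forall A B (f : Hom A B), comp f (idm A) = f;
  comp_assoc : forall A B C D (h : Hom C D) (g : Hom B C) (f : Hom A B),
      comp h (comp g f) = comp (comp h g) f
}.
Arguments Hom {c} _ _.
Arguments idm {c} _.
Arguments comp {c A B C} _ _.

Record Functor (J C : Category) := {
  fobj :> J -> C;
  fmap : forall a b, Hom a b -> Hom (fobj a) (fobj b);
  fmap_id : forall a, fmap (idm a) = idm (fobj a);
  fmap_comp : forall a b c (g : Hom b c) (f : Hom a b),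
      fmap (comp g f) = comp (fmap g) (fmap f)
}.
Arguments fmap {J C} f0 {a b} _.

Definition FiniteCat (J : Category) : Prop :=
  (exists l : list (Obj J), forall x, In x l) /\
  (forall a b : J, exists l : list (Hom a b), forall u, In u l).

Definition IsLimit (J C : Category) (D : Functor J C) (L : C)
    (leg : forall j, Hom L (D j)) : Prop :=
  (forall j k (u : Hom j k), comp (fmap D u) (leg j) = leg k) /\
  (forall (M : C) (leg' : forall j, Hom M (D j)),
      (forall j k (u : Hom j k), comp (fmap D u) (leg' j) = leg' k) ->
      exists h : Hom M L, (forall j, comp (leg j) h = leg' j) /\
        (forall h' : Hom M L, (forall j, comp (leg j) h' = leg' j) -> h' = h)).

Definition IsColimit (J C : Category) (D : Functor J C) (L : C)
    (leg : forall j, Hom (D j) L) : Prop :=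
  (forall j k (u : Hom j k), comp (leg k) (fmap D u) = leg j) /\
  (forall (M : C) (leg' : forall j, Hom (D j) M),
      (forall j k (u : Hom j k), comp (leg' k) (fmap D u) = leg' j) ->
      exists h : Hom L M, (forall j, comp h (leg j) = leg' j) /\
        (forall h' : Hom L M, (forall j, comp h' (leg j) = leg' j) -> h' = h)).

Definition Bicomplete (C : Category) : Prop :=
  forall (J : Category), FiniteCat J -> forall D : Functor J C,
    (exists (L : C) (leg : forall j, Hom L (D j)), IsLimit leg) /\
    (exists (L : C) (leg : forall j, Hom (D j) L), IsColimit leg).

Definition MorClass (C : Category) := forall A B : C, Hom A B -> Prop.

Definition is_iso (C : Category) (A B : C) (f : Hom A B) : Prop :=
  exists g : Hom B A, comp g f = idm A /\ comp f g = idm B.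

Definition isoC (C : Category) : MorClass C := fun A B f => is_iso f.

Definition cap (C : Category) (K L : MorClass C) : MorClass C :=
  fun A B f => K A B f /\ L A B f.

Definition lifts (C : Category) (A B X Y : C) (f : Hom A B) (g : Hom X Y) : Prop :=
  forall (u : Hom A X) (v : Hom B Y), comp g u = comp v f ->
    exists d : Hom B X, comp d f = u /\ comp g d = v.

Definition WFS (C : Category) (L R : MorClass C) : Prop :=
  (forall A B (f : Hom A B),
      L A B f <-> (forall X Y (g : Hom X Y), R X Y g -> lifts f g)) /\
  (forall X Y (g : Hom X Y),
      R X Y g <-> (forall A B (f : Hom A B), L A B f -> lifts f g)) /\
  (forall A B (f : Hom A B), exists (M : C) (i : Hom A M) (p : Hom M B),
      L A M i /\ R M B p /\ f = comp p i).

Definition Subcategory (C : Category) (K : MorClass C) : Prop :=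
  (forall A : C, K A A (idm A)) /\
  (forall A B D (f : Hom A B) (g : Hom B D), K A B f -> K B D g -> K A D (comp g f)).

Definition TwoOutOfThree (C : Category) (W : MorClass C) : Prop :=
  forall A B D (f : Hom A B) (g : Hom B D),
    (W A B f -> W B D g -> W A D (comp g f)) /\
    (W A B f -> W A D (comp g f) -> W B D g) /\
    (W B D g -> W A D (comp g f) -> W A B f).

Definition ModelStructure (C : Category) (we cof fib : MorClass C) : Prop :=
  Subcategory we /\ Subcategory cof /\ Subcategory fib /\
  WFS cof (cap fib we) /\ WFS (cap cof we) fib /\ TwoOutOfThree we.

Inductive E3 := Emp | Emid | Estar.

Definition E3rank (x : E3) : nat := match x with Emp => 0 | Emid => 1 | Estar => 2 end.

Definition E3hom (x y : E3) : Type := if Nat.leb (E3rank x) (E3rank y) then unit else Empty_set.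

Definition E3id (x : E3) : E3hom x x := match x with Emp => tt | Emid => tt | Estar => tt end.

Definition E3comp (x y z : E3) : E3hom y z -> E3hom x y -> E3hom x z.
Proof. destruct x, y, z; simpl; intros g f; first [exact tt | exact (match f with end) | exact (match g with end)]. Defined.

Lemma E3hom_unique (x y : E3) (f g : E3hom x y) : f = g.
Proof. destruct x, y; simpl in *; destruct f; try destruct g; reflexivity. Qed.

Definition Eprime : Category.
Proof.
  refine {| Obj := E3; Hom := E3hom; idm := E3id; comp := E3comp |};
  intros; apply E3hom_unique.
Defined.

Definition cofF (C : Category) (F : Functor C Eprime) : MorClass C :=
  fun A B f => F B <> Emp \/ is_iso f.

Definition fibF (C : Category) (F : Functor C Eprime) : MorClass C :=
  fun X Y f => F X <> Estar \/ is_iso f.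

(* In the thin category E', F(f) = 1_x iff F(source) = F(target) = x. *)
Definition weF (C : Category) (F : Functor C Eprime) : MorClass C :=
  fun A B f => (F A = Emp /\ F B = Emp) \/ (F A = Estar /\ F B = Estar) \/ is_iso f.

Set Implicit Arguments.
Unset Strict Implicit.

(* A functor F : C -> E' is a monotone "level" map on objects: a morphism
   A -> B forces F(A) <= F(B) in the order emp < E < star, and isomorphisms
   preserve levels.  Reading the classes of C^F through this order gives
     cof = {F(B) <> emp} u iso,        fib /\ we = {F(B) = emp} u iso,
     cof /\ we = {F(A) = star} u iso,  fib = {F(A) <> star} u iso,
   and we = {F(A) = F(B), and f iso when this level is E}.
   Each of the two pairs has the shape (Lp u iso, Rp u iso) where every
   morphism satisfies Lp or Rp and no commutative square has an Lp-map on
   the left and an Rp-map on the right.  A general lemma shows that such a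
   "dichotomy" pair is always a weak factorization system (factor through an
   identity; a map lifting against itself is an isomorphism).  Two-out-of-three
   for we reduces to two-out-of-three for isomorphisms. *)

Section IsomorphismsAndLifting.
Variable C : Category.

Lemma iso_id (A : C) : is_iso (idm A).
Proof. exists (idm A). rewrite comp_id_l. split; reflexivity. Qed.

Lemma iso_comp (A B D : C) (f : Hom A B) (g : Hom B D) :
  is_iso f -> is_iso g -> is_iso (comp g f).
Proof.
  intros [f' [Hff' Hf'f]] [g' [Hgg' Hg'g]]. exists (comp f' g'). split.
  - rewrite comp_assoc, <- (comp_assoc f'), Hgg', comp_id_r. exact Hff'.
  - rewrite comp_assoc, <- (comp_assoc g), Hf'f, comp_id_r. exact Hg'g.
Qed.

Lemma iso_inverse (A B : C) (f : Hom A B) (f' : Hom B A) :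
  comp f' f = idm A -> comp f f' = idm B -> is_iso f'.
Proof. intros Hl Hr. exists f. split; assumption. Qed.

Lemma iso_two_out_of_three : TwoOutOfThree (@isoC C).
Proof.
  intros A B D f g. split; [|split]; unfold isoC.
  - apply iso_comp.
  - intros [f' [Hl Hr]] Hgf.
    assert (Hg : g = comp (comp g f) f')
      by (rewrite <- comp_assoc, Hr, comp_id_r; reflexivity).
    rewrite Hg. apply iso_comp; [exact (iso_inverse Hl Hr) | exact Hgf].
  - intros [g' [Hl Hr]] Hgf.
    assert (Hf : f = comp g' (comp g f))
      by (rewrite comp_assoc, Hl, comp_id_l; reflexivity).
    rewrite Hf. apply iso_comp; [exact Hgf | exact (iso_inverse Hl Hr)].
Qed.

Lemma subcategory_of_two_out_of_three (W : MorClass C) :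
  (forall A : C, W A A (idm A)) -> TwoOutOfThree W -> Subcategory W.
Proof. intros Hid H23. split; [exact Hid |]. intros A B D f g. apply H23. Qed.

Lemma lifts_iso_l (A B X Y : C) (f : Hom A B) (g : Hom X Y) :
  is_iso f -> lifts f g.
Proof.
  intros [f' [Hl Hr]] u v Hsq. exists (comp u f'). split.
  - rewrite <- comp_assoc, Hl, comp_id_r. reflexivity.
  - rewrite comp_assoc, Hsq, <- comp_assoc, Hr, comp_id_r. reflexivity.
Qed.

Lemma lifts_iso_r (A B X Y : C) (f : Hom A B) (g : Hom X Y) :
  is_iso g -> lifts f g.
Proof.
  intros [g' [Hl Hr]] u v Hsq. exists (comp g' v). split.
  - rewrite <- comp_assoc, <- Hsq, comp_assoc, Hl, comp_id_l. reflexivity.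
  - rewrite comp_assoc, Hr, comp_id_l. reflexivity.
Qed.

Lemma iso_of_self_lift (A B : C) (f : Hom A B) : lifts f f -> is_iso f.
Proof.
  intros H. destruct (H (idm A) (idm B)) as [d [Hl Hr]].
  - rewrite comp_id_l, comp_id_r. reflexivity.
  - exists d. split; assumption.
Qed.

Definition orIso (P : MorClass C) : MorClass C := fun A B f => P A B f \/ is_iso f.

Lemma wfs_of_dichotomy (Lp Rp : MorClass C) :
  (forall A B (f : Hom A B), Lp A B f \/ Rp A B f) ->
  (forall A B X Y (f : Hom A B) (g : Hom X Y), Lp A B f -> Rp X Y g -> lifts f g) ->
  WFS (orIso Lp) (orIso Rp).
Proof.
  intros Hcover Hlift.
  assert (Hlifts : forall A B X Y (f : Hom A B) (g : Hom X Y),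
             orIso Lp f -> orIso Rp g -> lifts f g).
  { intros A B X Y f g [Hf|Hf] [Hg|Hg];
      auto using lifts_iso_l, lifts_iso_r. }
  split; [|split].
  - intros A B f. split; [intros Hf X Y g; apply Hlifts, Hf |].
    intros H. destruct (Hcover A B f) as [Hf|Hf]; [left; exact Hf | right].
    apply iso_of_self_lift, H. left; exact Hf.
  - intros X Y g. split; [intros Hg A B f Hf; apply Hlifts; assumption |].
    intros H. destruct (Hcover X Y g) as [Hg|Hg]; [right | left; exact Hg].
    apply iso_of_self_lift, H. left; exact Hg.
  - intros A B f. destruct (Hcover A B f) as [Hf|Hf].
    + exists B, f, (idm B). split; [left; exact Hf | split].
      * right; apply iso_id.
      * rewrite comp_id_l; reflexivity.
    + exists A, (idm A), f. split; [right; apply iso_id | split].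
      * left; exact Hf.
      * rewrite comp_id_r; reflexivity.
Qed.

Lemma wfs_ext (L L' R R' : MorClass C) :
  (forall A B (f : Hom A B), L A B f <-> L' A B f) ->
  (forall A B (f : Hom A B), R A B f <-> R' A B f) ->
  WFS L R -> WFS L' R'.
Proof.
  intros EL ER [HL [HR Hfact]]. split; [|split].
  - intros A B f. rewrite <- EL, HL.
    split; intros H X Y g Hg; apply H, ER, Hg.
  - intros X Y g. rewrite <- ER, HR.
    split; intros H A B f Hf; apply H, EL, Hf.
  - intros A B f. destruct (Hfact A B f) as (M & i & p & Hi & Hp & Hf).
    exists M, i, p. split; [apply EL, Hi | split; [apply ER, Hp | exact Hf]].
Qed.

Lemma subcategory_orIso_target (Q : C -> Prop) :
  (forall A B (f : Hom A B), is_iso f -> (Q A <-> Q B)) ->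
  Subcategory (orIso (fun _ B _ => Q B)).
Proof.
  intros HQ. split; [intros A; right; apply iso_id |].
  intros A B D f g Hf [Hg|Hg]; [left; exact Hg |].
  destruct Hf as [Hf|Hf].
  - left. apply (HQ _ _ g Hg), Hf.
  - right. apply iso_comp; assumption.
Qed.

Lemma subcategory_orIso_source (Q : C -> Prop) :
  (forall A B (f : Hom A B), is_iso f -> (Q A <-> Q B)) ->
  Subcategory (orIso (fun A _ _ => Q A)).
Proof.
  intros HQ. split; [intros A; right; apply iso_id |].
  intros A B D f g [Hf|Hf] Hg; [left; exact Hf |].
  destruct Hg as [Hg|Hg].
  - left. apply (HQ _ _ f Hf), Hg.
  - right. apply iso_comp; assumption.
Qed.

End IsomorphismsAndLifting.

Section LevelsInEprime.
Variable C : Category.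
Variable F : Functor C Eprime.

(* A morphism A -> B forces F(A) <= F(B): E' has no arrows going down. *)
Lemma level_mono (A B : C) (f : Hom A B) : E3rank (F A) <= E3rank (F B).
Proof.
  pose proof (fmap F f) as h. cbn in h. unfold E3hom in h.
  apply PeanoNat.Nat.leb_le. destruct (Nat.leb _ _); [reflexivity | destruct h].
Qed.

Lemma level_emp_down (A B : C) (f : Hom A B) : F B = Emp -> F A = Emp.
Proof.
  intros EB. pose proof (level_mono f) as H. rewrite EB in H.
  destruct (F A); [reflexivity | |]; apply PeanoNat.Nat.leb_le in H; discriminate H.
Qed.

Lemma level_star_up (A B : C) (f : Hom A B) : F A = Estar -> F B = Estar.
Proof.
  intros EA. pose proof (level_mono f) as H. rewrite EA in H.
  destruct (F B); [| | reflexivity]; apply PeanoNat.Nat.leb_le in H; discriminate H.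
Qed.

(* Isomorphisms preserve levels, by antisymmetry of the order of E'. *)
Lemma level_iso (A B : C) (f : Hom A B) : is_iso f -> F A = F B.
Proof.
  intros [g _].
  assert (E : E3rank (F A) = E3rank (F B))
    by exact (PeanoNat.Nat.le_antisymm _ _ (level_mono f) (level_mono g)).
  destruct (F A), (F B); cbn in E; congruence.
Qed.

Lemma weF_iff (A B : C) (f : Hom A B) :
  weF F f <-> F A = F B /\ (F A = Emid -> is_iso f).
Proof.
  split.
  - intros [[EA EB]|[[EA EB]|Hf]].
    + rewrite EA, EB. split; [reflexivity | discriminate].
    + rewrite EA, EB. split; [reflexivity | discriminate].
    + split; [exact (level_iso Hf) | intros _; exact Hf].
  - intros [E Hmid]. unfold weF. destruct (F A) eqn:EA.
    + left; split; congruence.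
    + right; right; apply Hmid; reflexivity.
    + right; left; split; congruence.
Qed.

Lemma weF_two_out_of_three : TwoOutOfThree (weF F).
Proof.
  intros A B D f g.
  destruct (iso_two_out_of_three f g) as (Hcomp & Hright & Hleft).
  rewrite !weF_iff. split; [|split].
  - intros [Ef If] [Eg Ig]. split; [congruence |].
    intros Em. apply Hcomp; [apply If | apply Ig]; congruence.
  - intros [Ef If] [Egf Igf]. split; [congruence |].
    intros Em. apply Hright; [apply If | apply Igf]; congruence.
  - intros [Eg Ig] [Egf Igf]. split; [congruence |].
    intros Em. apply Hleft; [apply Ig | apply Igf]; congruence.
Qed.

Lemma acyclic_fibration_iff (X Y : C) (g : Hom X Y) :
  cap (fibF F) (weF F) g <-> orIso (fun _ Y _ => F Y = Emp) g.
Proof.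
  unfold cap, orIso, fibF. rewrite weF_iff. split.
  - intros [[Hfib|Hiso] [E Hmid]]; [| right; exact Hiso].
    destruct (F X) eqn:EX.
    + left; congruence.
    + right; apply Hmid; reflexivity.
    + congruence.
  - intros [EY|Hiso].
    + pose proof (level_emp_down g EY) as EX.
      split; [left; congruence | split; congruence].
    + split; [right; exact Hiso | split; [exact (level_iso Hiso) | intros _; exact Hiso]].
Qed.

Lemma acyclic_cofibration_iff (A B : C) (f : Hom A B) :
  cap (cofF F) (weF F) f <-> orIso (fun A _ _ => F A = Estar) f.
Proof.
  unfold cap, orIso, cofF. rewrite weF_iff. split.
  - intros [[Hcof|Hiso] [E Hmid]]; [| right; exact Hiso].
    destruct (F B) eqn:EB.
    + congruence.
    + right; apply Hmid; congruence.
    + left; congruence.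
  - intros [EA|Hiso].
    + pose proof (level_star_up f EA) as EB.
      split; [left; congruence | split; congruence].
    + split; [right; exact Hiso | split; [exact (level_iso Hiso) | intros _; exact Hiso]].
Qed.

Lemma level_property_iso (P : E3 -> Prop) (A B : C) (f : Hom A B) :
  is_iso f -> (P (F A) <-> P (F B)).
Proof. intros Hf. rewrite (level_iso Hf). reflexivity. Qed.

End LevelsInEprime.

Theorem proposition4 (C : Category) (HC : Bicomplete C) (F : Functor C Eprime) :
  ModelStructure (weF F) (cofF F) (fibF F).
Proof.
  split; [|split; [|split; [|split; [|split]]]].
  - apply subcategory_of_two_out_of_three; [| apply weF_two_out_of_three].
    intros A. right; right; apply iso_id.
  - exact (subcategory_orIso_target (level_property_iso F (fun x => x <> Emp))).
  - exact (subcategory_orIso_source (level_property_iso F (fun x => x <> Estar))).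
  -
    apply (wfs_ext (L := cofF F) (R := orIso (fun _ Y _ => F Y = Emp)));
      [reflexivity | intros; symmetry; apply acyclic_fibration_iff |].
    apply wfs_of_dichotomy.
    + intros A B f. destruct (F B); [right | left | left]; congruence.
    + intros A B X Y f g HB HY u v _. exfalso. exact (HB (level_emp_down v HY)).
  -
    apply (wfs_ext (L := orIso (fun A _ _ => F A = Estar)) (R := fibF F));
      [intros; symmetry; apply acyclic_cofibration_iff | reflexivity |].
    apply wfs_of_dichotomy.
    + intros A B f. destruct (F A); [right | right | left]; congruence.
    + intros A B X Y f g HA HX u v _. exfalso. exact (HX (level_star_up u HA)).
  - apply weF_two_out_of_three.
Qed.
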